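(* The restriction functor $R:\mathbb T({}_H\mathcal M)\to{}_H\mathcal M^{par}$, $R(M,T)=(T(M),\pi_T)$ (acting as the identity on morphisms), is an equivalence of categories.
   Context: Throughout, $k$ is a field and $H$ is a Hopf algebra over $k$ with bijective antipode $S$ and Sweedler notation $\Delta(h)=h_{(1)}\otimes h_{(2)}$. A partial representation of $H$ on a vector space $M$ is a linear map $\pi:H\to\mathrm{End}_k(M)$ satisfying, for all $h,k\in H$: - $\pi(1_H)=\mathrm{id}$; - $\pi(h)\pi(k_{(1)})\pi(S(k_{(2)}))=\pi(hk_{(1)})\pi(S(k_{(2)}))$; - $\pi(h_{(1)})\pi(S(h_{(2)}))\pi(k)=\pi(h_{(1)})\pi(S(h_{(2)})k)$; - $\pi(h)\pi(S(k_{(1)}))\pi(k_{(2)})=\pi(hS(k_{(1)}))\pi(k_{(2)})$; - $\pi(S(h_{(1)}))\pi(h_{(2)})\pi(k)=\pi(S(h_{(1)}))\pi(h_{(2)}k)$. The pair $(M,\pi)$ is then a partial $H$-module. Partial $H$-modules form the category ${}_H\mathcal M^{par}$, whose morphisms are linear maps $f$ with $f\circ\pi(h)=\pi'(h)\circ f$ for all $h$. For a left $H$-module $M$ (action $\triangleright$) and a linear $T:M\to M$, put $T_h(m)=h_{(1)}\triangleright T(S(h_{(2)})\triangleright m)$. A projection $T$ ($T^2=T$) satisfies the c-condition if $T_h\circ T=T\circ T_h$ for all $h\in H$. The category $\mathbb T({}_H\mathcal M)$ is defined as follows: - objects are pairs $(M,T)$ with $M$ a left $H$-module and $T$ a linear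 projection on $M$ satisfying the c-condition; - morphisms $f:(M,T)\to(N,S)$ are linear maps $f:T(M)\to S(N)$ with $f(T(h\triangleright m))=S(h\triangleright f(m))$ for all $h\in H$, $m\in T(M)$. For such $(M,T)$, $\pi_T(h)(m)=T(h\triangleright m)$ ($m\in T(M)$) makes $T(M)$ a partial $H$-module. *)

From HB Require Import structures.
From mathcomp Require Import all_boot all_order all_algebra.
Unset Implicit Arguments.
Unset Strict Implicit.
Unset Printing Implicit Defensive.
Import GRing.Theory.
Local Open Scope ring_scope.

Section HopfDefs.
Variable k : fieldType.
Variable H : algType k.

(** Elements of H (x) H are represented by finite lists of simple tensors
    [p.1 (x) p.2]; the coproduct is [Delta : H -> seq (H * H)], so that
    Sweedler sums  sum h_(1) .. h_(2)  become  \sum_(p <- Delta h) .. p.1 .. p.2. *)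

Definition lin_functional (f : H -> k) : Prop :=
  forall a x y, f (a *: x + y) = a * f x + f y.

Definition lin_map {U V : lmodType k} (f : U -> V) : Prop :=
  forall a x y, f (a *: x + y) = a *: f x + f y.

(** Equality in H (x) H (over a field, linear functionals separate tensors). *)
Definition tensor_eq (s t : seq (H * H)) : Prop :=
  forall f g, lin_functional f -> lin_functional g ->
    \sum_(p <- s) f p.1 * g p.2 = \sum_(p <- t) f p.1 * g p.2.

Variable Delta : H -> seq (H * H).
Variable eps : H -> k.
Variable S : H -> H.

Record is_hopf : Prop := {
  hopf_Delta_lin : forall a x y,
    tensor_eq (Delta (a *: x + y)) ([seq (a *: p.1, p.2) | p <- Delta x] ++ Delta y);
  hopf_coassoc : forall h f g l,
    lin_functional f -> lin_functional g -> lin_functional l ->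
    \sum_(p <- Delta h) (\sum_(q <- Delta p.1) f q.1 * g q.2) * l p.2
    = \sum_(p <- Delta h) f p.1 * (\sum_(q <- Delta p.2) g q.1 * l q.2);
  hopf_eps_lin : lin_functional eps;
  hopf_counit_l : forall h, \sum_(p <- Delta h) eps p.1 *: p.2 = h;
  hopf_counit_r : forall h, \sum_(p <- Delta h) eps p.2 *: p.1 = h;
  hopf_Delta_mul : forall x y,
    tensor_eq (Delta (x * y)) [seq (p.1 * q.1, p.2 * q.2) | p <- Delta x, q <- Delta y];
  hopf_Delta_1 : tensor_eq (Delta 1) [:: (1, 1)];
  hopf_eps_mul : forall x y, eps (x * y) = eps x * eps y;
  hopf_eps_1 : eps 1 = 1;
  hopf_S_lin : lin_map S;
  hopf_antipode_l : forall h, \sum_(p <- Delta h) S p.1 * p.2 = (eps h)%:A;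
  hopf_antipode_r : forall h, \sum_(p <- Delta h) p.1 * S p.2 = (eps h)%:A
}.

Record is_Hmod {M : lmodType k} (act : H -> M -> M) : Prop := {
  hmod_lin : forall h, lin_map (act h);
  hmod_linH : forall a x y m, act (a *: x + y) m = a *: act x m + act y m;
  hmod_one : forall m, act 1 m = m;
  hmod_mul : forall x y m, act (x * y) m = act x (act y m)
}.

Record is_partial_rep {V : lmodType k} (pi : H -> V -> V) : Prop := {
  prep_lin : forall h, lin_map (pi h);
  prep_linH : forall a x y v, pi (a *: x + y) v = a *: pi x v + pi y v;
  prep_one : forall v, pi 1 v = v;
  prep_ax1 : forall h x v, \sum_(p <- Delta x) pi h (pi p.1 (pi (S p.2) v))
                    = \sum_(p <- Delta x) pi (h * p.1) (pi (S p.2) v);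
  prep_ax2 : forall h x v, \sum_(p <- Delta h) pi p.1 (pi (S p.2) (pi x v))
                    = \sum_(p <- Delta h) pi p.1 (pi (S p.2 * x) v);
  prep_ax3 : forall h x v, \sum_(p <- Delta x) pi h (pi (S p.1) (pi p.2 v))
                    = \sum_(p <- Delta x) pi (h * S p.1) (pi p.2 v);
  prep_ax4 : forall h x v, \sum_(p <- Delta h) pi (S p.1) (pi p.2 (pi x v))
                    = \sum_(p <- Delta h) pi (S p.1) (pi (p.2 * x) v)
}.

Definition Tconj {M : lmodType k} (act : H -> M -> M) (T : M -> M) (h : H) (m : M) : M :=
  \sum_(p <- Delta h) act p.1 (T (act (S p.2) m)).

Record TObj := {
  t_car : lmodType k;
  t_act : H -> t_car -> t_car;
  t_act_mod : is_Hmod t_act;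
  t_T : t_car -> t_car;
  t_T_lin : lin_map t_T;
  t_T_idem : forall m, t_T (t_T m) = t_T m;
  t_T_c : forall h m, Tconj t_act t_T h (t_T m) = t_T (Tconj t_act t_T h m)
}.


(** The subspace T(M) = {m | T m = m} as a k-vector space. *)
Definition fixT (X : TObj) : {pred t_car X} := fun x => t_T X x == x.

Lemma fixT_submod (X : TObj) : GRing.submod_closed (fixT X).
Proof.
split.
  rewrite /fixT unfold_in /=; apply/eqP.
  have h := t_T_lin X 1 0 0; rewrite !scale1r !addr0 in h.
  by apply: (addrI (t_T X 0)); rewrite addr0 -h.
move=> a x y; rewrite /fixT !unfold_in /= => /eqP hx /eqP hy.
by apply/eqP; rewrite t_T_lin hx hy.
Qed.

HB.instance Definition _ (X : TObj) :=
  GRing.isSubmodClosed.Build k (t_car X) (fixT X) (fixT_submod X).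

Definition img (X : TObj) := {x : t_car X | x \in fixT X}.
HB.instance Definition _ (X : TObj) := [isSub for (@proj1_sig _ _ : img X -> t_car X)].
HB.instance Definition _ (X : TObj) := [Choice of img X by <:].
HB.instance Definition _ (X : TObj) := [SubChoice_isSubLmodule of img X by <:].

Lemma piT_subproof (X : TObj) (y : t_car X) : t_T X y \in fixT X.
Proof. by rewrite /fixT unfold_in /= t_T_idem. Qed.

Definition piT (X : TObj) (h : H) (m : img X) : img X :=
  Sub (t_T X (t_act X h (val m))) (piT_subproof X (t_act X h (val m))).

Definition Hom_T (X Y : TObj) (f : img X -> img Y) : Prop :=
  lin_map f /\ forall h m, val (f (piT X h m)) = t_T Y (t_act Y h (val (f m))).

Record PMod := {
  p_car : lmodType k;
  p_pi : H -> p_car -> p_car;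
  p_ax : is_partial_rep p_pi
}.


Definition Hom_P (A B : PMod) (f : p_car A -> p_car B) : Prop :=
  lin_map f /\ forall h v, f (p_pi A h v) = p_pi B h (f v).

End HopfDefs.

(** Equivalence of categories, for two categories whose objects have carriers
    C1 X / C2 A, whose morphisms are the functions satisfying Hom1 / Hom2,
    with composition = function composition and identities = id.
    (Fo, Fm) must be a functor, and there must be a functor (Go, Gm) with natural
    isomorphisms  eta : Id => G o F  and  epsi : F o G => Id. *)
Definition is_functor {O1 O2 : Type} {C1 : O1 -> Type} {C2 : O2 -> Type}
  (Hom1 : forall X Y, (C1 X -> C1 Y) -> Prop)
  (Hom2 : forall A B, (C2 A -> C2 B) -> Prop)
  {Fo : O1 -> O2} (Fm : forall X Y, (C1 X -> C1 Y) -> (C2 (Fo X) -> C2 (Fo Y))) : Prop :=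
  [/\ forall X Y f, Hom1 X Y f -> Hom2 (Fo X) (Fo Y) (Fm X Y f),
      forall X, Fm X X id =1 id &
      forall X Y Z f g, Hom1 X Y f -> Hom1 Y Z g ->
        Fm X Z (g \o f) =1 Fm Y Z g \o Fm X Y f].

Definition is_iso {O : Type} {C : O -> Type} (Hom : forall X Y, (C X -> C Y) -> Prop)
  {X Y : O} (f : C X -> C Y) : Prop :=
  Hom X Y f /\ exists g : C Y -> C X, [/\ Hom Y X g, g \o f =1 id & f \o g =1 id].

Definition is_equivalence {O1 O2 : Type} {C1 : O1 -> Type} {C2 : O2 -> Type}
  (Hom1 : forall X Y, (C1 X -> C1 Y) -> Prop)
  (Hom2 : forall A B, (C2 A -> C2 B) -> Prop)
  (Fo : O1 -> O2) (Fm : forall X Y, (C1 X -> C1 Y) -> (C2 (Fo X) -> C2 (Fo Y))) : Prop :=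
  is_functor Hom1 Hom2 Fm /\
  exists (Go : O2 -> O1) (Gm : forall A B, (C2 A -> C2 B) -> (C1 (Go A) -> C1 (Go B))),
    is_functor Hom2 Hom1 Gm /\
    (exists eta : forall X, C1 X -> C1 (Go (Fo X)),
      (forall X, is_iso Hom1 (eta X)) /\
      (forall X Y f, Hom1 X Y f -> eta Y \o f =1 Gm _ _ (Fm X Y f) \o eta X)) /\
    (exists epsi : forall A, C2 (Fo (Go A)) -> C2 A,
      (forall A, is_iso Hom2 (epsi A)) /\
      (forall A B g, Hom2 A B g -> epsi B \o Fm _ _ (Gm A B g) =1 g \o epsi A)).

(* Restriction lands in partial modules because two operators on M commute with T: the
   conjugate T_h = h_(1) |> T(S(h_(2)) |> -), by the c-condition, and its mirror
   S(h_(1)) |> T(h_(2) |> -), by coassociativity, the counit and the antipode. Each of the four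
   partial-representation axioms on T(M) is one of these two commutations, read on the left or
   on the right.
   A quasi-inverse is globalization: for a partial module (V, pi), H acts by right translation
   on the linear maps f : H -> V compatible with pi, with projection f |-> pi(-)(f 1). Then
   v |-> pi(-) v and f |-> f 1 are inverse isomorphisms between V and the restriction of its
   globalization, and both unit and counit are built from them.
   Tensors in H (x) H are lists compared through linear forms, so each Hopf identity is first
   transferred to arbitrary bilinear and trilinear maps: any finite family of vectors is fixed
   by a finite-rank operator sum_i f_i(-) v_i, whose forms f_i come from Zorn's lemma. *)

From HB Require Import structures.
From mathcomp Require Import all_boot all_order all_algebra.
From mathcomp Require Import boolp classical_sets functions.
Set Implicit Arguments.
Unset Strict Implicit.
Unset Printing Implicit Defensive.
Import GRing.Theory.
Local Open Scope ring_scope.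

Section LinearMaps.
Variables (k : fieldType) (U W : lmodType k) (f : U -> W).
Hypothesis f_lin : lin_map k f.

Lemma lin_map0 : f 0 = 0.
Proof.
have := f_lin 1 0 0; rewrite !scale1r addr0 => f00.
by apply: (addrI (f 0)); rewrite addr0 -f00.
Qed.

Lemma lin_mapD x y : f (x + y) = f x + f y.
Proof. by rewrite -[x]scale1r f_lin !scale1r. Qed.

Lemma lin_mapZ a x : f (a *: x) = a *: f x.
Proof. by rewrite -[a *: x]addr0 f_lin lin_map0 addr0. Qed.

Lemma lin_map_sum (I : Type) (r : seq I) (F : I -> U) :
  f (\sum_(i <- r) F i) = \sum_(i <- r) f (F i).
Proof. by elim: r => [|i r IH]; rewrite ?big_nil ?lin_map0 // !big_cons lin_mapD IH. Qed.

End LinearMaps.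

Section DualVectors.
Variables (k : fieldType) (V : lmodType k).

Definition linear_form (f : V -> k) := forall a x y, f (a *: x + y) = a * f x + f y.

Lemma linear_form0 f : linear_form f -> f 0 = 0.
Proof. exact: (@lin_map0 k V k^o). Qed.

Lemma linear_formD f : linear_form f -> forall x y, f (x + y) = f x + f y.
Proof. exact: (@lin_mapD k V k^o). Qed.

Lemma linear_formZ f : linear_form f -> forall a x, f (a *: x) = a * f x.
Proof. exact: (@lin_mapZ k V k^o). Qed.

Lemma linear_form_sum f : linear_form f -> forall (I : Type) (r : seq I) (F : I -> V),
  f (\sum_(i <- r) F i) = \sum_(i <- r) f (F i).
Proof. exact: (@lin_map_sum k V k^o). Qed.

Record dual := Dual { dual_fun :> V -> k; dualP : linear_form dual_fun }.

End DualVectors.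

Section ExistsForm.
Variables (k : fieldType) (V : lmodType k) (u : V).
Local Open Scope classical_set_scope.

Definition subspace_avoiding (A : set V) :=
  (forall a x y, A x -> A y -> A (a *: x + y)) /\ ~ A u.

Lemma exists_max_subspace_avoiding :
  exists A, subspace_avoiding A /\ forall B, A `<` B -> ~ subspace_avoiding B.
Proof.
apply: Zorn_bigcup => F FP Ftot; split; last by move=> [X FX Xu]; apply: (FP X FX).2.
move=> a x y [X FX Xx] [Y FY Yy].
have [XY|YX] := Ftot X Y FX FY.
  by exists Y => //; apply: (FP Y FY).1 => //; apply: XY.
by exists X => //; apply: (FP X FX).1 => //; apply: YX.
Qed.

Hypothesis u_neq0 : u != 0.
Variable A : set V.
Hypotheses (A_closed : forall a x y, A x -> A y -> A (a *: x + y)) (A_u : ~ A u).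
Hypothesis A_max : forall B, A `<` B -> ~ subspace_avoiding B.

Lemma max_avoiding0 : A 0.
Proof.
have [//|nA0] := pselect (A 0).
have A_empty x : ~ A x by move=> Ax; apply: nA0; rewrite -(addNr x) -scaleN1r; apply: A_closed.
exfalso; apply: (A_max (B := [set 0])).
  by split=> [x /A_empty //|/(_ 0 erefl)].
split=> [a x y -> ->|/eqP]; first by rewrite scaler0 addr0.
by rewrite (negbTE u_neq0).
Qed.

(* Maximality makes [A] a hyperplane complementary to the line through [u]. *)
Lemma max_avoiding_coord v : exists a, A (v - a *: u).
Proof.
have [Av|nAv] := pselect (A v); first by exists 0; rewrite scale0r subr0.
pose B := [set x | exists c a, A c /\ x = c + a *: v].
have Bu : B u.
  have [//|nBu] := pselect (B u); exfalso; apply: (A_max (B := B)); last first.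
    split=> // a x y [c1 [a1 [Ac1 ->]]] [c2 [a2 [Ac2 ->]]].
    exists (a *: c1 + c2), (a * a1 + a2); split; first exact: A_closed.
    by rewrite scalerDr scalerA scalerDl addrACA.
  split=> [x Ax|/(_ v) Bv]; first by exists x, 0; rewrite scale0r addr0.
  apply: nAv; apply: Bv; exists 0, 1; rewrite add0r scale1r.
  by split=> //; apply: max_avoiding0.
case: Bu => c [a [Ac ua]].
have a_neq0 : a != 0 by apply/eqP => a0; apply: A_u; rewrite ua a0 scale0r addr0.
exists a^-1; rewrite ua scalerDr scalerA mulVf // scale1r opprD addrCA subrr addr0.
by rewrite -scaleNr -[_ *: c]addr0; apply: A_closed => //; apply: max_avoiding0.
Qed.

Lemma max_avoiding_coord_uniq v a b : A (v - a *: u) -> A (v - b *: u) -> a = b.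
Proof.
move=> Aa Ab; apply/eqP; apply: contraT => ab; exfalso; apply: A_u.
have Aba : A ((b - a) *: u).
  by have := A_closed (-1) Ab Aa; rewrite scaleN1r scalerBl opprB addrA subrK.
have := A_closed (b - a)^-1 Aba max_avoiding0.
by rewrite addr0 scalerA mulVf ?scale1r // subr_eq0 eq_sym.
Qed.

Lemma max_avoiding_form : exists g, linear_form g /\ g u = 1.
Proof.
pose g v := projT1 (cid (max_avoiding_coord v)).
have gP v : A (v - g v *: u) by exact: projT2 (cid (max_avoiding_coord v)).
exists g; split; last first.
  by apply: (max_avoiding_coord_uniq (gP u)); rewrite scale1r subrr; apply: max_avoiding0.
move=> a x y; apply: (max_avoiding_coord_uniq (gP _)).
have := A_closed a (gP x) (gP y).
by rewrite scalerDl scalerBr scalerA opprD addrACA.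
Qed.

End ExistsForm.

Lemma exists_form_eq1 (k : fieldType) (V : lmodType k) (u : V) :
  u != 0 -> exists g, linear_form g /\ g u = 1.
Proof.
move=> u_neq0; have [A [[A_closed A_u] A_max]] := exists_max_subspace_avoiding u.
exact: (max_avoiding_form u_neq0 A_closed A_u A_max).
Qed.

Section Tensors.
Variables (k : fieldType) (V : lmodType k).

Lemma dual_separates (x y : V) : (forall f : dual V, f x = f y) -> x = y.
Proof.
move=> fxy; apply/eqP; rewrite -subr_eq0; apply: contraT => xy_neq0.
have [g [g_lin gxy]] := exists_form_eq1 xy_neq0.
have gxy0 : g (x - y) = 0.
  by rewrite linear_formD // -scaleN1r linear_formZ // mulN1r [g x](fxy (Dual g_lin)) subrr.
by move: gxy; rewrite gxy0 => /eqP; rewrite eq_sym oner_eq0.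
Qed.

Definition dual_op (L : seq (V * dual V)) (x : V) : V := \sum_(q <- L) q.2 x *: q.1.

Lemma exists_dual_op_fix (ws : seq V) :
  exists L, forall w, w \in ws -> dual_op L w = w.
Proof.
elim: ws => [|w ws [L HL]]; first by exists [::].
have [Lw|Lw] := eqVneq (dual_op L w) w.
  by exists L => w'; rewrite inE => /orP[/eqP ->|/HL].
have u_neq0 : w - dual_op L w != 0 by rewrite subr_eq0 eq_sym.
have [g [g_lin gu]] := exists_form_eq1 u_neq0.
set u := w - dual_op L w in gu *.
pose L' := [seq (q.1 - g q.1 *: u, q.2) | q <- L] ++ [:: (u, Dual g_lin)].
have L'E x : dual_op L' x = dual_op L x + g (x - dual_op L x) *: u.
  rewrite /dual_op big_cat big_map big_seq1 /= linear_formD // -scaleN1r.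
  rewrite linear_formZ // linear_form_sum // mulN1r scalerDl scaleNr scaler_suml.
  have -> : \sum_(q <- L) q.2 x *: (q.1 - g q.1 *: u)
      = \sum_(q <- L) q.2 x *: q.1 - \sum_(q <- L) g (q.2 x *: q.1) *: u.
    by rewrite -sumrB; apply: eq_bigr => q _; rewrite scalerBr scalerA linear_formZ.
  by rewrite addrAC addrA.
exists L' => w'; rewrite inE L'E => /orP[/eqP ->|/HL ->].
  by rewrite gu scale1r addrC subrK.
by rewrite subrr linear_form0 // scale0r addr0.
Qed.

Lemma dual_op_expand L (U : lmodType k) (f : V -> U) x :
  lin_map k f -> dual_op L x = x -> f x = \sum_(q <- L) q.2 x *: f q.1.
Proof.
move=> f_lin Lx; rewrite -{1}Lx /dual_op lin_map_sum //.
by apply: eq_bigr => q _; rewrite lin_mapZ.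
Qed.
Definition bilin_map (M : lmodType k) (G : V -> V -> M) :=
  (forall b, lin_map k (G^~ b)) /\ (forall a, lin_map k (G a)).

Definition trilin_map (M : lmodType k) (F : V -> V -> V -> M) :=
  [/\ forall b c, lin_map k (fun a => F a b c),
      forall a c, lin_map k (fun b => F a b c) & forall a b, lin_map k (F a b)].

Lemma sum_bilin_eq (M : lmodType k) (G : V -> V -> M) (s t : seq (V * V)) :
  bilin_map G ->
  (forall f g : dual V, \sum_(p <- s) f p.1 * g p.2 = \sum_(p <- t) f p.1 * g p.2) ->
  \sum_(p <- s) G p.1 p.2 = \sum_(p <- t) G p.1 p.2.
Proof.
move=> [G1 G2] st; have [L HL] := exists_dual_op_fix [seq p.2 | p <- s ++ t].
have expand r : {subset r <= s ++ t} ->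
    \sum_(p <- r) G p.1 p.2 = \sum_(q <- L) G (\sum_(p <- r) q.2 p.2 *: p.1) q.1.
  move=> rst; rewrite big_seq (eq_bigr (fun p => \sum_(q <- L) G (q.2 p.2 *: p.1) q.1)).
    by rewrite -big_seq exchange_big; apply: eq_bigr => q _; rewrite (lin_map_sum (G1 _)).
  move=> p /rst pst; rewrite (dual_op_expand (G2 p.1) (HL _ (map_f _ pst))).
  by apply: eq_bigr => q _; rewrite (lin_mapZ (G1 _)).
rewrite !expand => [|p pt|p ps]; rewrite ?mem_cat ?pt ?ps ?orbT //.
apply: eq_bigr => q _; congr G; apply: dual_separates => f.
rewrite !(linear_form_sum (dualP f)).
under eq_bigr do rewrite (linear_formZ (dualP f)) mulrC.
by under [RHS]eq_bigr do rewrite (linear_formZ (dualP f)) mulrC.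
Qed.

(* Expanding the last argument reduces the trilinear case to the bilinear one. *)
Lemma sum_trilin_eq (M : lmodType k) (F : V -> V -> V -> M) (s t : seq (V * V * V)) :
  trilin_map F ->
  (forall f g l : dual V, \sum_(p <- s) f p.1.1 * g p.1.2 * l p.2
                        = \sum_(p <- t) f p.1.1 * g p.1.2 * l p.2) ->
  \sum_(p <- s) F p.1.1 p.1.2 p.2 = \sum_(p <- t) F p.1.1 p.1.2 p.2.
Proof.
move=> [F1 F2 F3] st; have [L HL] := exists_dual_op_fix [seq p.2 | p <- s ++ t].
have expand r : {subset r <= s ++ t} ->
    \sum_(p <- r) F p.1.1 p.1.2 p.2
    = \sum_(q <- L) \sum_(p <- [seq (q.2 p.2 *: p.1.1, p.1.2) | p <- r]) F p.1 p.2 q.1.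
  move=> rst; rewrite big_seq.
  rewrite (eq_bigr (fun p => \sum_(q <- L) F (q.2 p.2 *: p.1.1) p.1.2 q.1)).
    by rewrite -big_seq exchange_big; apply: eq_bigr => q _; rewrite big_map.
  move=> p /rst pst; rewrite (dual_op_expand (F3 _ _) (HL _ (map_f _ pst))).
  by apply: eq_bigr => q _; rewrite (lin_mapZ (F1 _ _)).
rewrite !expand => [|p pt|p ps]; rewrite ?mem_cat ?pt ?ps ?orbT //.
apply: eq_bigr => q _; apply: (sum_bilin_eq (G := fun a b => F a b q.1)) => [|f g].
  by split=> [b|a]; [apply: F1 | apply: F2].
rewrite !big_map.
under eq_bigr do rewrite (linear_formZ (dualP f)) -mulrA mulrC.
by under [RHS]eq_bigr do rewrite (linear_formZ (dualP f)) -mulrA mulrC; apply: st.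
Qed.

End Tensors.

Section HopfIdentities.
Variables (k : fieldType) (H : algType k).
Variables (Delta : H -> seq (H * H)) (eps : H -> k) (S : H -> H).
Hypothesis hH : is_hopf k H Delta eps S.
Variable M : lmodType k.

Lemma sum_Delta_lin (G : H -> H -> M) :
  bilin_map G -> lin_map k (fun x => \sum_(p <- Delta x) G p.1 p.2).
Proof.
move=> G_bilin a x y.
have Delta_axy (f g : dual H) := hopf_Delta_lin _ _ _ _ _ hH a x y f g (dualP f) (dualP g).
rewrite (sum_bilin_eq G_bilin Delta_axy).
rewrite big_cat big_map scaler_sumr; congr (_ + _); apply: eq_bigr => p _.
exact: (lin_mapZ (G_bilin.1 _)).
Qed.

Lemma coassoc_trilin (F : H -> H -> H -> M) : trilin_map F -> forall h,
  \sum_(p <- Delta h) \sum_(q <- Delta p.1) F q.1 q.2 p.2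
  = \sum_(p <- Delta h) \sum_(q <- Delta p.2) F p.1 q.1 q.2.
Proof.
move=> F_trilin h.
have := sum_trilin_eq (s := [seq (q, p.2) | p <- Delta h, q <- Delta p.1])
  (t := [seq (p.1, q.1, q.2) | p <- Delta h, q <- Delta p.2]) F_trilin.
rewrite !big_allpairs_dep; apply=> f g l; rewrite !big_allpairs_dep /=.
under eq_bigr do rewrite -mulr_suml.
under [RHS]eq_bigr do under eq_bigr do rewrite -mulrA.
under [RHS]eq_bigr do rewrite -mulr_sumr.
exact: (hopf_coassoc _ _ _ _ _ hH h f g l (dualP f) (dualP g) (dualP l)).
Qed.

Lemma counit_l_lin (F : H -> M) h :
  lin_map k F -> \sum_(p <- Delta h) eps p.1 *: F p.2 = F h.
Proof.
move=> F_lin; rewrite -[in RHS](hopf_counit_l _ _ _ _ _ hH h) lin_map_sum //.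
by apply: eq_bigr => p _; rewrite lin_mapZ.
Qed.

Lemma counit_r_lin (F : H -> M) h :
  lin_map k F -> \sum_(p <- Delta h) eps p.2 *: F p.1 = F h.
Proof.
move=> F_lin; rewrite -[in RHS](hopf_counit_r _ _ _ _ _ hH h) lin_map_sum //.
by apply: eq_bigr => p _; rewrite lin_mapZ.
Qed.

Lemma antipode_l_lin (F : H -> M) h :
  lin_map k F -> \sum_(p <- Delta h) F (S p.1 * p.2) = eps h *: F 1.
Proof. by move=> F_lin; rewrite -lin_map_sum // (hopf_antipode_l _ _ _ _ _ hH) -lin_mapZ. Qed.

End HopfIdentities.

Lemma lin_comp (k : fieldType) (U V W : lmodType k) (f : V -> W) (g : U -> V) :
  lin_map k f -> lin_map k g -> lin_map k (f \o g).
Proof. by move=> f_lin g_lin a x y; rewrite /= g_lin f_lin. Qed.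

Section TObject.
Variables (k : fieldType) (H : algType k).
Variables (Delta : H -> seq (H * H)) (eps : H -> k) (S : H -> H).
Hypothesis hH : is_hopf k H Delta eps S.
Variable X : TObj k H Delta S.
Local Notation M := (t_car k H Delta S X).
Local Notation act := (t_act k H Delta S X).
Local Notation T := (t_T k H Delta S X).
Local Notation Tc := (Tconj k H Delta S act T).

Let S_lin : lin_map k S := hopf_S_lin _ _ _ _ _ hH.
Let act_linl m : lin_map k (act^~ m).
Proof. by move=> a x y; rewrite (hmod_linH _ _ _ (t_act_mod _ _ _ _ X)). Qed.
Let act_linr h : lin_map k (act h) := hmod_lin _ _ _ (t_act_mod _ _ _ _ X) h.
Let act1 m : act 1 m = m := hmod_one _ _ _ (t_act_mod _ _ _ _ X) m.
Let act_mul x y m : act (x * y) m = act x (act y m) :=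
  hmod_mul _ _ _ (t_act_mod _ _ _ _ X) x y m.
Let T_lin : lin_map k T := t_T_lin _ _ _ _ X.

Definition sandwich (D : seq (H * H)) (m : M) : M := \sum_(p <- D) act p.1 (T (act p.2 m)).

Lemma TconjE h : Tc h =1 sandwich [seq (p.1, S p.2) | p <- Delta h].
Proof. by move=> m; rewrite /sandwich big_map. Qed.

Definition Tconj_rev h := sandwich [seq (S p.1, p.2) | p <- Delta h].

Lemma act_T_expand g m : act g (T m) = \sum_(q <- Delta g) Tc q.1 (act q.2 m).
Proof.
pose F a b c := act a (T (act (S b) (act c m))).
have F_tri : trilin_map F.
  split=> [b c|a c|a b]; first exact: act_linl.
    exact: (lin_comp (act_linr a) (lin_comp T_lin (lin_comp (act_linl _) S_lin))).
  exact: (lin_comp (act_linr a) (lin_comp T_lin (lin_comp (act_linr _) (act_linl m)))).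
rewrite [RHS](_ : _ = \sum_(p <- Delta g) \sum_(q <- Delta p.1) F q.1 q.2 p.2) //.
rewrite (coassoc_trilin hH F_tri) /F.
have antipode p : \sum_(q <- Delta p.2) act p.1 (T (act (S q.1) (act q.2 m)))
    = eps p.2 *: act p.1 (T m).
  under eq_bigr do rewrite -act_mul.
  rewrite (antipode_l_lin hH (F := act p.1 \o T \o act^~ m)) /= ?act1 //.
  exact: (lin_comp (lin_comp (act_linr _) T_lin) (act_linl m)).
under [RHS]eq_bigr do rewrite antipode.
by rewrite (counit_r_lin hH (F := act^~ (T m))).
Qed.

Lemma T_act_T_expand g m : T (act g (T m)) = \sum_(q <- Delta g) Tc q.1 (T (act q.2 m)).
Proof.
rewrite act_T_expand (lin_map_sum T_lin); apply: eq_bigr => q _.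
by rewrite (t_T_c _ _ _ _ X).
Qed.

Lemma Tconj_rev_linl m : lin_map k (Tconj_rev^~ m).
Proof.
have G_bilin : bilin_map (fun a b => act (S a) (T (act b m))).
  split=> [b|a]; first exact: (lin_comp (act_linl _) S_lin).
  exact: (lin_comp (act_linr _) (lin_comp T_lin (act_linl m))).
by move=> a x y; rewrite /Tconj_rev /sandwich !big_map; apply: (sum_Delta_lin hH G_bilin).
Qed.

Lemma sum_Tconj_T y m : \sum_(q <- Delta y) Tc q.1 (T (act q.2 m))
  = \sum_(q <- Delta y) act q.1 (T (Tconj_rev q.2 m)).
Proof.
pose F a b c := act a (T (act (S b) (T (act c m)))).
have F_tri : trilin_map F.
  split=> [b c|a c|a b]; first exact: act_linl.
    exact: (lin_comp (act_linr a) (lin_comp T_lin (lin_comp (act_linl _) S_lin))).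
  exact: (lin_comp (act_linr a) (lin_comp T_lin (lin_comp (act_linr _)
           (lin_comp T_lin (act_linl m))))).
rewrite [LHS](_ : _ = \sum_(p <- Delta y) \sum_(q <- Delta p.1) F q.1 q.2 p.2) //.
rewrite (coassoc_trilin hH F_tri); apply: eq_bigr => q _.
by rewrite /Tconj_rev /sandwich big_map (lin_map_sum T_lin) (lin_map_sum (act_linr _)).
Qed.

Lemma Tconj_rev_T h m : Tconj_rev h (T m) = T (Tconj_rev h m).
Proof.
pose K a b c := act (S a * b) (T (Tconj_rev c m)).
have K_tri : trilin_map K.
  split=> [b c|a c|a b].
  - by move=> a x y; rewrite /K S_lin mulrDl -scalerAl act_linl.
  - by move=> a' x y; rewrite /K mulrDr -scalerAr act_linl.
  exact: (lin_comp (act_linr _) (lin_comp T_lin (Tconj_rev_linl m))).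
rewrite {1}/Tconj_rev /sandwich big_map.
under eq_bigr do rewrite T_act_T_expand sum_Tconj_T (lin_map_sum (act_linr _)).
under eq_bigr do under eq_bigr do rewrite -act_mul.
rewrite [LHS](_ : _ = \sum_(p <- Delta h) \sum_(q <- Delta p.2) K p.1 q.1 q.2) //.
rewrite -(coassoc_trilin hH K_tri) /K.
under eq_bigr do rewrite (antipode_l_lin hH (F := act^~ _)) ?act1 //.
exact: (counit_l_lin hH (F := T \o Tconj_rev^~ m) h (lin_comp T_lin (Tconj_rev_linl m))).
Qed.

Local Notation pi := (piT k H Delta S X).

Lemma T_val (v : img k H Delta S X) : T (val v) = val v.
Proof. exact/eqP/(valP v). Qed.

Section PiTSandwich.
Variable D : seq (H * H).
Hypothesis sandwich_T : forall m, sandwich D (T m) = T (sandwich D m).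

Lemma piT_sandwich_l h v :
  \sum_(p <- D) pi h (pi p.1 (pi p.2 v)) = \sum_(p <- D) pi (h * p.1) (pi p.2 v).
Proof.
apply: val_inj; rewrite !raddf_sum /=.
have T_sandwich : T (sandwich D (val v)) = sandwich D (val v).
  by rewrite -[in RHS]T_val sandwich_T.
transitivity (T (act h (T (sandwich D (val v))))).
  by rewrite /sandwich (lin_map_sum T_lin) (lin_map_sum (act_linr _)) (lin_map_sum T_lin).
rewrite T_sandwich /sandwich (lin_map_sum (act_linr _)) (lin_map_sum T_lin).
by apply: eq_bigr => p _; rewrite act_mul.
Qed.

Lemma piT_sandwich_r h v :
  \sum_(p <- D) pi p.1 (pi p.2 (pi h v)) = \sum_(p <- D) pi p.1 (pi (p.2 * h) v).
Proof.
apply: val_inj; rewrite !raddf_sum /=.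
transitivity (T (sandwich D (T (act h (val v))))).
  by rewrite /sandwich (lin_map_sum T_lin).
rewrite sandwich_T (t_T_idem _ _ _ _ X) /sandwich (lin_map_sum T_lin).
by apply: eq_bigr => p _; rewrite act_mul.
Qed.

End PiTSandwich.

Lemma piT_partial_rep : is_partial_rep k H Delta S pi.
Proof.
have Tconj_T m x : sandwich [seq (p.1, S p.2) | p <- Delta x] (T m)
    = T (sandwich [seq (p.1, S p.2) | p <- Delta x] m).
  by rewrite -!TconjE (t_T_c _ _ _ _ X).
split.
- by move=> h a x y; apply: val_inj; rewrite /= act_linr T_lin.
- by move=> a x y v; apply: val_inj; rewrite /= act_linl T_lin.
- by move=> v; apply: val_inj; rewrite /= act1 T_val.
- by move=> h x v; have := piT_sandwich_l (Tconj_T^~ x) h v; rewrite !big_map.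
- by move=> h x v; have := piT_sandwich_r (Tconj_T^~ h) x v; rewrite !big_map.
- by move=> h x v; have := piT_sandwich_l (Tconj_rev_T x) h v; rewrite !big_map.
- by move=> h x v; have := piT_sandwich_r (Tconj_rev_T h) x v; rewrite !big_map.
Qed.

End TObject.

Section GlobalizationSpace.
Variables (k : fieldType) (H : algType k) (Delta : H -> seq (H * H)) (S : H -> H).
Variable A : PMod k H Delta S.
Local Notation V := (p_car k H Delta S A).
Local Notation pi := (p_pi k H Delta S A).

(* The compatibility condition is exactly what [glob_T_c] needs, and it is stable under right
   translation. *)
Definition glob_compatible (f : H -> V) := forall g h,
  \sum_(p <- Delta h) pi p.1 (f (S p.2 * g)) = \sum_(p <- Delta h) pi p.1 (pi (S p.2) (f g)).

Definition glob_pred : {pred H -> V} := fun f => `[< lin_map k f /\ glob_compatible f >].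

Lemma glob_pred_submod : GRing.submod_closed glob_pred.
Proof.
have pi_lin h : lin_map k (pi h) := prep_lin _ _ _ _ _ (p_ax _ _ _ _ A) h.
split.
  apply/asboolP; split=> [a x y|g h]; first by rewrite scaler0 addr0.
  by apply: eq_bigr => p _; rewrite /= !(lin_map0 (pi_lin _)).
move=> a f g /asboolP[f_lin f_comp] /asboolP[g_lin g_comp]; apply/asboolP; split.
  move=> b x y; rewrite !fctE f_lin g_lin.
  by rewrite !scalerDr !scalerA addrACA [a * b]mulrC.
move=> g' h; rewrite !fctE.
rewrite (eq_bigr (fun p => a *: pi p.1 (f (S p.2 * g')) + pi p.1 (g (S p.2 * g')))).
  rewrite big_split -scaler_sumr f_comp g_comp scaler_sumr -big_split.
  by apply: eq_bigr => p _; rewrite /= pi_lin pi_lin.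
by move=> p _; rewrite pi_lin.
Qed.

End GlobalizationSpace.
Arguments glob_pred {k H Delta S} A.
Arguments glob_pred_submod {k H Delta S} A.

HB.instance Definition _ k H Delta S (A : PMod k H Delta S) :=
  GRing.isSubmodClosed.Build k (H -> p_car k H Delta S A) (glob_pred A) (glob_pred_submod A).

Definition glob k H Delta S (A : PMod k H Delta S) :=
  {f : H -> p_car k H Delta S A | f \in glob_pred A}.
HB.instance Definition _ k H Delta S (A : PMod k H Delta S) :=
  [isSub for (@proj1_sig _ _ : glob A -> (H -> p_car k H Delta S A))].
HB.instance Definition _ k H Delta S (A : PMod k H Delta S) := [Choice of glob A by <:].
HB.instance Definition _ k H Delta S (A : PMod k H Delta S) :=
  [SubChoice_isSubLmodule of glob A by <:].

Section Globalization.
Variables (k : fieldType) (H : algType k) (Delta : H -> seq (H * H)) (S : H -> H).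
Variable A : PMod k H Delta S.
Local Notation V := (p_car k H Delta S A).
Local Notation pi := (p_pi k H Delta S A).

Let pi_lin h : lin_map k (pi h) := prep_lin _ _ _ _ _ (p_ax _ _ _ _ A) h.
Let pi1 v : pi 1 v = v := prep_one _ _ _ _ _ (p_ax _ _ _ _ A) v.

Lemma globP (f : glob A) : lin_map k (val f) /\ glob_compatible (val f).
Proof. exact/asboolP/(valP f). Qed.

Lemma glob_act_subproof h (f : glob A) : (fun y => val f (y * h)) \in glob_pred A.
Proof.
have [f_lin f_comp] := globP f; apply/asboolP; split.
  by move=> a x y; rewrite mulrDl -scalerAl f_lin.
by move=> g h'; rewrite -f_comp; apply: eq_bigr => p _; rewrite mulrA.
Qed.

Definition glob_act h (f : glob A) : glob A :=
  Sub (fun y => val f (y * h)) (glob_act_subproof h f).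

Definition pi_map (v : V) : H -> V := pi^~ v.

Lemma pi_map_glob v : pi_map v \in glob_pred A.
Proof.
apply/asboolP; split=> [a x y|g h]; first exact: (prep_linH _ _ _ _ _ (p_ax _ _ _ _ A)).
by rewrite /pi_map (prep_ax2 _ _ _ _ _ (p_ax _ _ _ _ A)).
Qed.

Definition glob_T (f : glob A) : glob A := Sub (pi_map (val f 1)) (pi_map_glob (val f 1)).

Lemma glob_act_mod : is_Hmod k H glob_act.
Proof.
split=> [h a f g|a x y f|f|x y f]; apply: val_inj; apply/funext => z //=.
- by rewrite mulrDr -scalerAr (globP f).1.
- by rewrite mulr1.
- by rewrite mulrA.
Qed.

Lemma glob_T_lin : lin_map k glob_T.
Proof. by move=> a f g; apply: val_inj; apply/funext => z; rewrite /= !fctE /pi_map pi_lin. Qed.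

Lemma glob_T_idem f : glob_T (glob_T f) = glob_T f.
Proof. by apply: val_inj; apply/funext => z; rewrite /= /pi_map pi1. Qed.

Lemma glob_val_sum (I : Type) (r : seq I) (F : I -> glob A) :
  sval (\sum_(i <- r) F i) = \sum_(i <- r) sval (F i).
Proof. by elim: r => [|i r IH]; rewrite ?big_nil ?big_cons //= IH. Qed.

Lemma glob_T_c h f : Tconj k H Delta S glob_act glob_T h (glob_T f)
  = glob_T (Tconj k H Delta S glob_act glob_T h f).
Proof.
apply: val_inj; apply/funext => z; rewrite /Tconj /= !glob_val_sum !fct_sumE /pi_map /=.
under eq_bigr do rewrite !mul1r; under [in RHS]eq_bigr do rewrite !mul1r.
rewrite -(prep_ax1 _ _ _ _ _ (p_ax _ _ _ _ A)) -(lin_map_sum (pi_lin z)).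
by rewrite -(globP f).2; congr (pi z _); apply: eq_bigr => p _; rewrite mulr1.
Qed.

Definition globalization : TObj k H Delta S :=
  Build_TObj k H Delta S (glob A) glob_act glob_act_mod glob_T glob_T_lin glob_T_idem glob_T_c.

Lemma pi_map_fixed v : Sub (pi_map v) (pi_map_glob v) \in fixT k H Delta S globalization.
Proof. by apply/eqP; apply: val_inj; apply/funext => z; rewrite /= /pi_map pi1. Qed.

Definition glob_emb (v : V) : img k H Delta S globalization :=
  Sub (Sub (pi_map v) (pi_map_glob v)) (pi_map_fixed v).

Definition glob_ev (f : img k H Delta S globalization) : V := val (val f) 1.

Lemma glob_embK : cancel glob_emb glob_ev.
Proof. by move=> v; rewrite /glob_ev /= /pi_map pi1. Qed.

Lemma glob_evK : cancel glob_ev glob_emb.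
Proof. by move=> f; apply: val_inj; rewrite -[RHS]T_val; apply: val_inj. Qed.

Lemma glob_emb_lin : lin_map k glob_emb.
Proof.
by move=> a v w; do 2!apply: val_inj; apply/funext => z; rewrite /= !fctE /pi_map pi_lin.
Qed.

Lemma glob_ev_lin : lin_map k glob_ev.
Proof. by []. Qed.

Lemma glob_emb_pi h v :
  piT k H Delta S globalization h (glob_emb v) = glob_emb (pi h v).
Proof. by do 2!apply: val_inj; apply/funext => z; rewrite /= /pi_map mul1r. Qed.

Lemma glob_ev_pi h f : glob_ev (piT k H Delta S globalization h f) = pi h (glob_ev f).
Proof. by rewrite -[f]glob_evK glob_emb_pi !glob_embK. Qed.

End Globalization.
Arguments glob_emb {k H Delta S} A v.

Section Equivalence.
Variables (k : fieldType) (H : algType k).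
Variables (Delta : H -> seq (H * H)) (eps : H -> k) (S : H -> H).
Hypothesis hH : is_hopf k H Delta eps S.
Local Notation Hom_T := (Hom_T k H Delta S).
Local Notation Hom_P := (Hom_P k H Delta S).

Definition restriction (X : TObj k H Delta S) : PMod k H Delta S :=
  Build_PMod k H Delta S (img k H Delta S X) (piT k H Delta S X) (piT_partial_rep hH X).

Lemma restriction_functor :
  is_functor Hom_T Hom_P (Fo := restriction) (fun X Y (f : img k H Delta S X -> _) => f).
Proof.
split=> // X Y f [f_lin f_hom]; split=> // h m.
by apply: val_inj; apply: f_hom.
Qed.

Definition glob_map (A B : PMod k H Delta S)
    (g : p_car k H Delta S A -> p_car k H Delta S B) :=
  glob_emb B \o g \o glob_ev (A := A).

Lemma glob_functor : is_functor Hom_P Hom_T glob_map.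
Proof.
split=> [A B g [g_lin g_hom]|A f|A B C f g _ _ x] /=; last 2 first.
- exact: glob_evK.
- by rewrite /glob_map /= glob_embK.
split=> [a x y|h f]; first by rewrite /glob_map /= glob_ev_lin g_lin glob_emb_lin.
transitivity (val (piT k H Delta S (globalization B) h (glob_map g f))) => //.
by congr val; rewrite /glob_map /= glob_ev_pi g_hom glob_emb_pi.
Qed.

Lemma glob_emb_iso X : is_iso Hom_T (glob_emb (restriction X)).
Proof.
split.
  by split=> [|h m]; [exact: (glob_emb_lin (A := restriction X)) | rewrite -glob_emb_pi].
exists (@glob_ev _ _ _ _ (restriction X)); split.
- by split=> [|h f]; [apply: glob_ev_lin | rewrite glob_ev_pi].
- exact: (glob_embK (A := restriction X)).
- exact: (glob_evK (A := restriction X)).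
Qed.

Lemma glob_ev_iso (A : PMod k H Delta S) :
  is_iso Hom_P (X := restriction (globalization A)) (glob_ev (A := A)).
Proof.
split; first by split=> [|h f]; [apply: glob_ev_lin | rewrite glob_ev_pi].
exists (glob_emb A); split.
- by split=> [|h v]; [apply: glob_emb_lin | rewrite -glob_emb_pi].
- exact: glob_evK.
- exact: glob_embK.
Qed.

End Equivalence.

Theorem mainTheorem2 (k : fieldType) (H : algType k)
  (Delta : H -> seq (H * H)) (eps : H -> k) (S : H -> H)
  (hH : is_hopf k H Delta eps S) (hS : bijective S) :
  exists HR : forall X : TObj k H Delta S, is_partial_rep k H Delta S (piT k H Delta S X),
    is_equivalence (Hom_T k H Delta S) (Hom_P k H Delta S)
      (fun X => Build_PMod k H Delta S (img k H Delta S X) (piT k H Delta S X) (HR X))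
      (fun X Y (f : img k H Delta S X -> img k H Delta S Y) => f).
Proof.
exists (piT_partial_rep hH); split; first exact: restriction_functor.
exists (@globalization k H Delta S), (@glob_map k H Delta S); split; first exact: glob_functor.
split.
  exists (fun X => glob_emb (restriction hH X)); split; first exact: glob_emb_iso.
  by move=> X Y f _ m; rewrite /glob_map /= glob_embK.
exists (fun A => glob_ev (A := A)); split; first exact: glob_ev_iso.
by move=> A B g _ f; rewrite /glob_map /= glob_embK.
Qed.
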